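(* Let $f,f_0\in\mathcal F$. Let $g$ and $\bar g_0$ be densities on $\mathcal X$, and let $g_0$ be a density on $\mathcal X$ such that $\eta\bar g_0(x)\ge g_0(x)$ for some constant $\eta>0$ and all $x\in\mathcal X$. Then $$d_h^2(f_0,f)\le4\eta\int\Big(\sqrt{f_0(y|x)\bar g_0(x)}-\sqrt{f(y|x)g(x)}\Big)^2\,dy\,dx.$$
   Context: $\mathcal Y\subset\mathbb R^{d_y}$ and $\mathcal X\subset\mathbb R^{d_x}$. $\mathcal F$ is the set of Borel measurable $f:\mathcal Y\times\mathcal X\to[0,\infty)$ with $\int f(y|x)\,dy=1$ for every $x$. For $f_1,f_2\in\mathcal F$, $d_h(f_1,f_2)=\big(\int(\sqrt{f_1(y|x)}-\sqrt{f_2(y|x)})^2g_0(x)\,dy\,dx\big)^{1/2}$. All densities are with respect to Lebesgue measure. *)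

(* R^d is modelled as d.-tuple R,
   equipped with the library's product (= Borel) sigma-algebra. *)
From mathcomp Require Import all_boot all_order all_algebra.
From mathcomp Require Import all_classical all_reals all_analysis.
Set Implicit Arguments. Unset Strict Implicit. Unset Printing Implicit Defensive.
Import Order.TTheory GRing.Theory Num.Theory.
Local Open Scope classical_set_scope.
Local Open Scope ring_scope.

(* mu is Lebesgue measure on R^d (on the Borel sets): it assigns to every
   closed box  prod_i [a_i, b_i]  its volume  prod_i (b_i - a_i).
   This determines mu uniquely (pi-lambda theorem). *)
Definition is_lebesgue_measure {R : realType} (d : nat)
    (mu : {measure set (d.-tuple R) -> \bar R}) : Prop :=
  forall a b : d.-tuple R, (forall i, tnth a i <= tnth b i) ->
    mu [set t | forall i, tnth a i <= tnth t i <= tnth b i] =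
      (\prod_(i < d) (tnth b i - tnth a i))%:E.

(* f belongs to the class F of conditional densities f(y|x) on Y x X
   (f y x stands for f(y|x)). *)
Definition cond_density {R : realType} (dy dx : nat)
    (muy : {measure set (dy.-tuple R) -> \bar R})
    (Y : set (dy.-tuple R)) (X : set (dx.-tuple R))
    (f : dy.-tuple R -> dx.-tuple R -> R) : Prop :=
  [/\ measurable_fun (Y `*` X) (fun p => f p.1 p.2),
      (forall y x, Y y -> X x -> 0 <= f y x) &
      (forall x, X x -> (\int[muy]_(y in Y) (f y x)%:E = 1)%E)].

Definition density_on {R : realType} (dx : nat)
    (mux : {measure set (dx.-tuple R) -> \bar R})
    (X : set (dx.-tuple R)) (g : dx.-tuple R -> R) : Prop :=
  [/\ measurable_fun X g,
      (forall x, X x -> 0 <= g x) &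
      (\int[mux]_(x in X) (g x)%:E = 1)%E].

Definition hellinger_sq {R : realType} (dy dx : nat)
    (muy : {measure set (dy.-tuple R) -> \bar R})
    (mux : {measure set (dx.-tuple R) -> \bar R})
    (Y : set (dy.-tuple R)) (X : set (dx.-tuple R))
    (g0 : dx.-tuple R -> R) (f1 f2 : dy.-tuple R -> dx.-tuple R -> R)
    : \bar R :=
  (\int[mux]_(x in X) \int[muy]_(y in Y)
     (((Num.sqrt (f1 y x) - Num.sqrt (f2 y x)) ^+ 2 * g0 x)%:E))%E.

From mathcomp Require Import all_boot all_order all_algebra.
From mathcomp Require Import all_classical all_reals all_analysis.
From mathcomp Require Import measurable_realfun ring.
Import Order.TTheory GRing.Theory Num.Theory.
Local Open Scope classical_set_scope.
Local Open Scope ring_scope.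

(* Fix x and write p = f0(.|x), q = f(.|x), a = gb0 x, b = g x.  For all
   nonnegative p, q, a, b,
     (sqrt p - sqrt q)^2 a + 2ap + 2bq <= 4 (sqrt (pa) - sqrt (qb))^2 + 2aq + 2bp,
   and since p and q are densities in y both correction terms integrate to
   2a + 2b.  Cancelling them gives
     int (sqrt p - sqrt q)^2 a dy <= 4 int (sqrt (pa) - sqrt (qb))^2 dy
   without the Cauchy-Schwarz bound int sqrt (pq) <= 1; then g0 x <= eta a
   and integration in x conclude.  Nothing about Lebesgue measure is used. *)

Lemma weighted_sqr_diff_le (R : realDomainType) (u v s t : R) :
  0 <= u -> 0 <= v ->
  (u - v) ^+ 2 * s ^+ 2 + (2 * s ^+ 2 * u ^+ 2 + 2 * t ^+ 2 * v ^+ 2)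
  <= 4 * (u * s - v * t) ^+ 2 + (2 * s ^+ 2 * v ^+ 2 + 2 * t ^+ 2 * u ^+ 2).
Proof.
move=> u0 v0; rewrite -subr_ge0.
have -> : 4 * (u * s - v * t) ^+ 2 + (2 * s ^+ 2 * v ^+ 2 + 2 * t ^+ 2 * u ^+ 2)
    - ((u - v) ^+ 2 * s ^+ 2 + (2 * s ^+ 2 * u ^+ 2 + 2 * t ^+ 2 * v ^+ 2))
    = (s ^+ 2 + 2 * t ^+ 2) * (u - v) ^+ 2 + 4 * (u * v) * (s - t) ^+ 2 by ring.
apply: addr_ge0; apply: mulr_ge0; rewrite ?sqr_ge0 //.
- by rewrite addr_ge0 ?sqr_ge0 // mulr_ge0 ?sqr_ge0.
- by rewrite !mulr_ge0.
Qed.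

Lemma sqrt_weighted_sqr_diff_le (R : rcfType) (p q a b : R) :
  0 <= p -> 0 <= q -> 0 <= a -> 0 <= b ->
  (Num.sqrt p - Num.sqrt q) ^+ 2 * a + (2 * a * p + 2 * b * q)
  <= 4 * (Num.sqrt (p * a) - Num.sqrt (q * b)) ^+ 2 + (2 * a * q + 2 * b * p).
Proof.
move=> p0 q0 a0 b0; rewrite !sqrtrM //.
have := @weighted_sqr_diff_le _ _ _ (Num.sqrt a) (Num.sqrt b) (sqrtr_ge0 p) (sqrtr_ge0 q).
by rewrite !sqr_sqrtr.
Qed.

Lemma measurable_fun_prod_section {d1 d2 d3} {T1 : measurableType d1}
    {T2 : measurableType d2} {T3 : measurableType d3}
    {Y : set T1} {X : set T2} {F : T1 -> T2 -> T3} {x : T2} :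
  measurable Y -> measurable X -> measurable_fun (Y `*` X) (fun p => F p.1 p.2) ->
  X x -> measurable_fun Y (F^~ x).
Proof.
move=> mY mX mF Xx.
have := measurable_comp (measurableX mY mX) _ mF
  (measurable_funS measurableT (@subsetT _ Y) (pair2_measurable x)).
by apply => _ [y Yy <-].
Qed.

Section nonneg_integral.
Context {d} {T : measurableType d} {R : realType} (mu : {measure set T -> \bar R}).
Local Open Scope ereal_scope.
Import HBNNSimple.

(* No measurability is assumed: the integral of a nonnegative function is a
   supremum over simple minorants.  The outer integrands in x below are not
   known to be measurable. *)
Lemma nonmeas_ge0_le_integral (D : set T) (f1 f2 : T -> \bar R) :
  (forall x, D x -> 0 <= f1 x) -> (forall x, D x -> f1 x <= f2 x) ->
  \int[mu]_(x in D) f1 x <= \int[mu]_(x in D) f2 x.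
Proof.
move=> f10 f12.
have f20 x : D x -> 0 <= f2 x by move=> Dx; exact: le_trans (f10 x Dx) (f12 x Dx).
rewrite !ge0_integralE //; apply: ereal_sup_le => _ [h /= hle <-].
exists h => //= x; apply: le_trans (hle x) _.
by rewrite /patch; case: ifP => // /[!inE] /f12.
Qed.

Lemma nonmeas_ge0_integralZl_le (D : set T) (f : T -> \bar R) (c : R) :
  (0 < c)%R -> (forall x, D x -> 0 <= f x) ->
  \int[mu]_(x in D) (c%:E * f x) <= c%:E * \int[mu]_(x in D) f x.
Proof.
move=> c0 f0.
have cf0 x : D x -> 0 <= c%:E * f x.
  by move=> Dx; apply: mule_ge0; [rewrite lee_fin ltW | exact: f0].
rewrite (ge0_integralE _ cf0) (ge0_integralE _ f0).
apply: ge_ereal_sup => _ [h /= hle <-].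
have ic0 : (0 <= c^-1)%R by rewrite invr_ge0 ltW.
pose h' := scale_nnsfun h ic0.
have -> : sintegral mu h = c%:E * sintegral mu h'.
  have -> : sintegral mu h' = c^-1%:E * sintegral mu h by exact: sintegralrM.
  by rewrite muleA -EFinM mulfV ?gt_eqF // mul1e.
apply: lee_wpmul2l; first by rewrite lee_fin ltW.
apply: ereal_sup_ubound; exists h' => //= x.
have := hle x; rewrite /h' /= /patch; case: ifPn => [/[!inE] Dx|_]; first last.
  have -> : (point : \bar R) = 0 by [].
  by rewrite !lee_fin => hx; rewrite mulr_ge0_le0 // invr_ge0 ltW.
move: (f0 x Dx); case: (f x) => [r _ ||] //=; last by move=> _ _; rewrite leey.
by rewrite -EFinM !lee_fin => hr; rewrite ler_pdivrMl.
Qed.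

Context {Y : set T} (mY : measurable Y) {p q : T -> R}.
Hypotheses (mp : measurable_fun Y p) (mq : measurable_fun Y q).
Hypotheses (p0 : forall y, Y y -> (0 <= p y)%R) (q0 : forall y, Y y -> (0 <= q y)%R).
Hypotheses (ip : \int[mu]_(y in Y) (p y)%:E = 1) (iq : \int[mu]_(y in Y) (q y)%:E = 1).

Lemma integral_add_mix_densities (k : T -> R) (al be : R) :
  measurable_fun Y k -> (forall y, Y y -> (0 <= k y)%R) -> (0 <= al)%R -> (0 <= be)%R ->
  \int[mu]_(y in Y) ((k y + (al * p y + be * q y))%R)%:E
    = \int[mu]_(y in Y) (k y)%:E + (al + be)%:E.
Proof.
move=> mk k0 al0 be0.
have mZ (c : R) (u : T -> R) : measurable_fun Y u -> measurable_fun Y (fun y => c * u y)%R.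
  by move=> mu'; apply: measurable_funM => //; exact: measurable_cst.
have ge0Z (c : R) (u : T -> R) : (0 <= c)%R -> (forall y, Y y -> (0 <= u y)%R) ->
    forall y, Y y -> 0 <= (c * u y)%:E.
  by move=> c0 u0 y Yy; rewrite lee_fin mulr_ge0 ?u0.
under eq_integral do rewrite EFinD.
rewrite ge0_integralD //; last 3 first.
- exact/measurable_EFinP.
- by move=> y Yy; rewrite lee_fin addr_ge0 ?mulr_ge0 ?p0 ?q0.
- by apply/measurable_EFinP; apply: measurable_funD; exact: mZ.
congr (_ + _).
under eq_integral do rewrite EFinD.
rewrite ge0_integralD //; last 4 first.
- exact: ge0Z.
- exact/measurable_EFinP/mZ.
- exact: ge0Z.
- exact/measurable_EFinP/mZ.
under eq_integral do rewrite EFinM.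
under [X in _ + X]eq_integral do rewrite EFinM.
rewrite !ge0_integralZl_EFin //; try exact/measurable_EFinP.
by rewrite ip iq !mule1 EFinD.
Qed.

Lemma hellinger_density_le (a b : R) : (0 <= a)%R -> (0 <= b)%R ->
  \int[mu]_(y in Y) (((Num.sqrt (p y) - Num.sqrt (q y)) ^+ 2 * a)%R)%:E <=
  4%:E * \int[mu]_(y in Y) (((Num.sqrt (p y * a) - Num.sqrt (q y * b)) ^+ 2)%R)%:E.
Proof.
move=> a0 b0.
pose K y := ((Num.sqrt (p y) - Num.sqrt (q y)) ^+ 2 * a)%R.
pose S y := ((Num.sqrt (p y * a) - Num.sqrt (q y * b)) ^+ 2)%R.
pose L y := (4 * S y)%R.
have msqrt (u : T -> R) : measurable_fun Y u -> measurable_fun Y (Num.sqrt \o u).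
  by move=> mu'; exact: measurableT_comp (continuous_measurable_fun (@sqrt_continuous R)) mu'.
have mMc (c : R) (u : T -> R) : measurable_fun Y u -> measurable_fun Y (fun y => u y * c)%R.
  by move=> mu'; apply: measurable_funM => //; exact: measurable_cst.
have mK : measurable_fun Y K.
  by apply: mMc; apply: measurable_funX; apply: measurable_funB; exact: msqrt.
have mS : measurable_fun Y S.
  by apply: measurable_funX; apply: measurable_funB; apply: msqrt; exact: mMc.
have mL : measurable_fun Y L by apply: measurable_funM => //; exact: measurable_cst.
have K0 y : (0 <= K y)%R by rewrite mulr_ge0 // sqr_ge0.
have L0 y : (0 <= L y)%R by rewrite mulr_ge0 // sqr_ge0.
have -> : 4%:E * \int[mu]_(y in Y) (S y)%:E = \int[mu]_(y in Y) (L y)%:E.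
  under [RHS]eq_integral do rewrite EFinM.
  by rewrite ge0_integralZl_EFin // => [y _|]; [rewrite lee_fin sqr_ge0 | exact/measurable_EFinP].
have a2 : (0 <= 2 * a)%R by rewrite mulr_ge0.
have b2 : (0 <= 2 * b)%R by rewrite mulr_ge0.
have lhs := integral_add_mix_densities K (2 * a) (2 * b) mK (fun y _ => K0 y) a2 b2.
have rhs := integral_add_mix_densities L (2 * b) (2 * a) mL (fun y _ => L0 y) b2 a2.
rewrite [(2 * b + _)%R]addrC in rhs.
rewrite -(@leeD2rE _ (2 * a + 2 * b)%:E) // -lhs -rhs.
apply: nonmeas_ge0_le_integral => y Yy.
  by rewrite lee_fin addr_ge0 // addr_ge0 // mulr_ge0 ?p0 ?q0.
by rewrite lee_fin [(2 * b * _ + _)%R]addrC sqrt_weighted_sqr_diff_le ?p0 ?q0.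
Qed.

Lemma hellinger_density_weight_le {a b c eta : R} :
  (0 <= a)%R -> (0 <= b)%R -> (0 <= c)%R -> (0 < eta)%R -> (c <= eta * a)%R ->
  \int[mu]_(y in Y) (((Num.sqrt (p y) - Num.sqrt (q y)) ^+ 2 * c)%R)%:E <=
  (4 * eta)%:E * \int[mu]_(y in Y) (((Num.sqrt (p y * a) - Num.sqrt (q y * b)) ^+ 2)%R)%:E.
Proof.
move=> a0 b0 c0 eta0 c_le.
pose K y := ((Num.sqrt (p y) - Num.sqrt (q y)) ^+ 2 * a)%R.
have K0 y : (0 <= K y)%R by rewrite mulr_ge0 // sqr_ge0.
apply: (@le_trans _ _ (\int[mu]_(y in Y) (eta%:E * (K y)%:E))).
  apply: nonmeas_ge0_le_integral => y Yy; first by rewrite lee_fin mulr_ge0 // sqr_ge0.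
  by rewrite -EFinM lee_fin /K mulrCA ler_wpM2l // sqr_ge0.
apply: (le_trans (@nonmeas_ge0_integralZl_le Y (fun y => (K y)%:E) _ eta0 _)) => [y _|];
  first by rewrite lee_fin.
rewrite mulrC EFinM -muleA; apply: lee_wpmul2l; first by rewrite lee_fin ltW.
exact: hellinger_density_le.
Qed.

End nonneg_integral.

Theorem corollary3 (R : realType) (dy dx : nat)
    (muy : {measure set (dy.-tuple R) -> \bar R})
    (mux : {measure set (dx.-tuple R) -> \bar R})
    (Y : set (dy.-tuple R)) (X : set (dx.-tuple R))
    (f f0 : dy.-tuple R -> dx.-tuple R -> R)
    (g gb0 g0 : dx.-tuple R -> R) (eta : R) :
  is_lebesgue_measure muy -> is_lebesgue_measure mux ->
  measurable Y -> measurable X ->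
  cond_density muy Y X f -> cond_density muy Y X f0 ->
  density_on mux X g -> density_on mux X gb0 -> density_on mux X g0 ->
  0 < eta -> (forall x, X x -> eta * gb0 x >= g0 x) ->
  (hellinger_sq muy mux Y X g0 f0 f <=
    (4 * eta)%:E * \int[mux]_(x in X) \int[muy]_(y in Y)
      (((Num.sqrt (f0 y x * gb0 x) - Num.sqrt (f y x * g x)) ^+ 2)%:E))%E.
Proof.
move=> _ _ mY mX [mf f_ge0 f_int] [mf0 f0_ge0 f0_int] [_ g_ge0 _] [_ gb0_ge0 _]
  [_ g0_ge0 _] eta0 g0_le.
have eta4 : 0 < 4 * eta by rewrite mulr_gt0.
pose H x := (\int[muy]_(y in Y)
  (((Num.sqrt (f0 y x * gb0 x) - Num.sqrt (f y x * g x)) ^+ 2)%:E))%E.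
have H0 x : X x -> (0 <= H x)%E.
  by move=> _; apply: integral_ge0 => y _; rewrite lee_fin sqr_ge0.
apply: (le_trans _ (nonmeas_ge0_integralZl_le mux X H _ eta4 H0)).
apply: nonmeas_ge0_le_integral => x Xx.
  by apply: integral_ge0 => y Yy; rewrite lee_fin mulr_ge0 ?sqr_ge0 ?g0_ge0.
exact: (hellinger_density_weight_le muy mY
  (measurable_fun_prod_section mY mX mf0 Xx) (measurable_fun_prod_section mY mX mf Xx)
  (fun y Yy => f0_ge0 y x Yy Xx) (fun y Yy => f_ge0 y x Yy Xx) (f0_int x Xx) (f_int x Xx)
  (gb0_ge0 x Xx) (g_ge0 x Xx) (g0_ge0 x Xx) eta0 (g0_le x Xx)).
Qed.
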